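(* There is a functionally Hausdorff, pseudocompact, first countable semigroup topology $\theta$ on the unit circle $\mathbb T=\{z\in\mathbb C:|z|=1\}$ (as a multiplicative group) which is not a group topology.
   Context: A semigroup topology on a group is a topology making the group multiplication continuous; a group topology additionally makes inversion continuous. A space is functionally Hausdorff if continuous real-valued functions separate its points. A space is pseudocompact if every locally finite family of nonempty open subsets is finite. *)

From Stdlib Require Import Reals List Lra.
From Coquelicot Require Import Coquelicot.
Open Scope R_scope.

Definition circle : Type := {z : C | Cmod z = 1}.

Lemma circle_mul_proof (a b : circle) :
  Cmod (Cmult (proj1_sig a) (proj1_sig b)) = 1.
Proof.
  destruct a as [a Ha], b as [b Hb]; simpl.
  rewrite Cmod_mult, Ha, Hb; ring.
Qed.

Definition cmul (a b : circle) : circle :=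
  exist _ (Cmult (proj1_sig a) (proj1_sig b)) (circle_mul_proof a b).

Lemma circle_inv_proof (a : circle) : Cmod (Cinv (proj1_sig a)) = 1.
Proof.
  destruct a as [a Ha]; simpl.
  assert (a <> 0%C) as H.
  { intro E; subst a; rewrite Cmod_0 in Ha; lra. }
  rewrite Cmod_inv by exact H. rewrite Ha; field.
Qed.

Definition cinv (a : circle) : circle :=
  exist _ (Cinv (proj1_sig a)) (circle_inv_proof a).

Definition is_topology {X : Type} (O : (X -> Prop) -> Prop) : Prop :=
  O (fun _ => True) /\
  (forall F : (X -> Prop) -> Prop, (forall U, F U -> O U) ->
      O (fun x => exists U, F U /\ U x)) /\
  (forall U V, O U -> O V -> O (fun x => U x /\ V x)).

Definition finite_family {X : Type} (F : (X -> Prop) -> Prop) : Prop :=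
  exists l : list (X -> Prop), forall A, F A -> In A l.

Definition locally_finite {X : Type} (O : (X -> Prop) -> Prop)
  (F : (X -> Prop) -> Prop) : Prop :=
  forall x, exists U, O U /\ U x /\
    finite_family (fun A => F A /\ exists y, A y /\ U y).

Definition pseudocompact {X : Type} (O : (X -> Prop) -> Prop) : Prop :=
  forall F : (X -> Prop) -> Prop,
    (forall U, F U -> O U /\ exists x, U x) ->
    locally_finite O F -> finite_family F.

Definition continuous_real {X : Type} (O : (X -> Prop) -> Prop)
  (f : X -> R) : Prop :=
  forall x (eps : R), 0 < eps ->
    exists U, O U /\ U x /\ forall y, U y -> Rabs (f y - f x) < eps.

Definition functionally_hausdorff {X : Type} (O : (X -> Prop) -> Prop) : Prop :=
  forall x y : X, x <> y ->
    exists f : X -> R, continuous_real O f /\ f x <> f y.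

Definition first_countable {X : Type} (O : (X -> Prop) -> Prop) : Prop :=
  forall x : X, exists B : nat -> (X -> Prop),
    (forall n, O (B n) /\ B n x) /\
    (forall U, O U -> U x -> exists n, forall y, B n y -> U y).

Definition mul_continuous (O : (circle -> Prop) -> Prop) : Prop :=
  forall x y W, O W -> W (cmul x y) ->
    exists U V, O U /\ O V /\ U x /\ V y /\
      forall u v, U u -> V v -> W (cmul u v).

Definition inv_continuous (O : (circle -> Prop) -> Prop) : Prop :=
  forall W, O W -> O (fun x => W (cinv x)).

Definition is_semigroup_topology (O : (circle -> Prop) -> Prop) : Prop :=
  is_topology O /\ mul_continuous O.

Definition is_group_topology (O : (circle -> Prop) -> Prop) : Prop :=
  is_topology O /\ mul_continuous O /\ inv_continuous O.

From Stdlib Require Import Reals Lra Lia ZArith List Classical IndefiniteDescription.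
From Coquelicot Require Import Coquelicot.
From mathcomp Require classical_sets.
Open Scope R_scope.

(* By Zorn's lemma there is a Q-linear map phi : R -> R vanishing on 2*pi*Q with
   phi (2*pi*sqrt 2) = 1; it descends to a homomorphism psi : T -> R that is unbounded on
   every neighbourhood of 1.  Declare open the sets containing, around each of their
   points x, an "upper ball" {u : psi x <= psi u, |u - x| < e}.  This refines the
   Euclidean topology, so it is functionally Hausdorff and first countable; additivity of
   psi makes multiplication continuous, while inversion reverses psi and is not.
   Unboundedness of psi near 1 makes upper balls around Euclidean-close points meet, and
   compactness of the circle then forces locally finite families of nonempty open sets to
   be finite. *)

Definition is_rational (r : R) : Prop := exists p q : Z, q <> 0%Z /\ r = IZR p / IZR q.

Lemma is_rational_IZR (m : Z) : is_rational (IZR m).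
Proof. exists m, 1%Z. split; [lia | field]. Qed.

Lemma is_rational_plus r s : is_rational r -> is_rational s -> is_rational (r + s).
Proof.
  intros [p [q [Hq ->]]] [p' [q' [Hq' ->]]].
  exists (p * q' + p' * q)%Z, (q * q')%Z. split; [lia|].
  rewrite plus_IZR, !mult_IZR. field. split; apply not_0_IZR; auto.
Qed.

Lemma is_rational_mult r s : is_rational r -> is_rational s -> is_rational (r * s).
Proof.
  intros [p [q [Hq ->]]] [p' [q' [Hq' ->]]].
  exists (p * p')%Z, (q * q')%Z. split; [lia|].
  rewrite !mult_IZR. field. split; apply not_0_IZR; auto.
Qed.

Lemma is_rational_opp r : is_rational r -> is_rational (- r).
Proof.
  intros Hr. replace (- r) with (IZR (-1) * r) by (simpl; ring).
  apply is_rational_mult; [apply is_rational_IZR | exact Hr].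
Qed.

Lemma is_rational_inv r : is_rational r -> is_rational (/ r).
Proof.
  intros [p [q [Hq ->]]].
  destruct (Z.eq_dec p 0) as [->|Hp].
  - exists 0%Z, 1%Z. split; [lia|]. unfold Rdiv. rewrite Rmult_0_l, Rinv_0. field.
  - exists q, p. split; auto. field. split; apply not_0_IZR; auto.
Qed.

Lemma Z_square_neq_double_square (p q : Z) : q <> 0%Z -> (p * p <> 2 * q * q)%Z.
Proof.
  enough (descent : forall n q p, (0 < q)%Z -> (Z.to_nat q < n)%nat -> (p * p <> 2 * q * q)%Z).
  { intros Hq E. apply (descent (S (Z.to_nat (Z.abs q))) (Z.abs q) (Z.abs p)); lia. }
  induction n as [|n IH]; intros q' p' Hq Hn E; [lia|].
  destruct (Z.Even_or_Odd p') as [[k ->]|[k ->]]; [|nia].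
  destruct (Z.Even_or_Odd q') as [[m ->]|[m ->]]; [|nia].
  apply (IH m k); nia.
Qed.

Lemma sqrt2_irrational : ~ is_rational (sqrt 2).
Proof.
  intros [p [q [Hq E]]].
  assert (Hpq : IZR p = sqrt 2 * IZR q) by (rewrite E; field; exact (not_0_IZR _ Hq)).
  apply (Z_square_neq_double_square p q Hq), eq_IZR.
  rewrite !mult_IZR, Hpq.
  transitivity ((sqrt 2 * sqrt 2) * IZR q * IZR q); [ring | now rewrite sqrt_sqrt by lra].
Qed.

(* The graph of a Q-linear map defined on a Q-subspace of R; the last clause makes it
   single-valued. *)
Definition rational_linear_graph (G : R * R -> Prop) : Prop :=
  G (0, 0) /\
  (forall a b, G a -> G b -> G (fst a + fst b, snd a + snd b)) /\
  (forall q a, is_rational q -> G a -> G (q * fst a, q * snd a)) /\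
  (forall y, G (0, y) -> y = 0).

Lemma rational_linear_graph_functional G x y y' :
  rational_linear_graph G -> G (x, y) -> G (x, y') -> y = y'.
Proof.
  intros (_ & Gadd & Gscale & G0y) Hy Hy'.
  assert (Hdiff := Gadd _ _ Hy (Gscale _ _ (is_rational_IZR (-1)) Hy')). simpl in Hdiff.
  replace (x + -1 * x) with 0 in Hdiff by ring.
  apply G0y in Hdiff. lra.
Qed.

Lemma rational_linear_graph_chain_union (F : (R * R -> Prop) -> Prop) :
  (forall X t, F X -> X t -> rational_linear_graph X) ->
  (forall X Y, F X -> F Y -> (forall t, X t -> Y t) \/ (forall t, Y t -> X t)) ->
  (exists X t, F X /\ X t) ->
  rational_linear_graph (fun t => exists2 X, F X & X t).
Proof.
  intros Hlin Hchain [X0 [t0 [FX0 X0t0]]].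
  split; [|split; [|split]].
  - exists X0; [exact FX0 | apply (Hlin _ _ FX0 X0t0)].
  - intros a b [X FX Xa] [Y FY Yb].
    destruct (Hchain X Y FX FY) as [XY|YX].
    + exists Y; [exact FY | apply (Hlin _ _ FY Yb); auto].
    + exists X; [exact FX | apply (Hlin _ _ FX Xa); auto].
  - intros q a Hq [X FX Xa]. exists X; [exact FX | apply (Hlin _ _ FX Xa); auto].
  - intros y [X FX Xy]. apply (Hlin _ _ FX Xy); exact Xy.
Qed.

Lemma rational_linear_graph_adjoin G x0 :
  rational_linear_graph G -> (forall y, ~ G (x0, y)) ->
  rational_linear_graph
    (fun t => exists a q, G a /\ is_rational q /\ t = (fst a + q * x0, snd a)).
Proof.
  intros HG Hx0. pose proof HG as (G00 & Gadd & Gscale & G0y).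
  split; [|split; [|split]].
  - exists (0, 0), 0. split; [exact G00|]. split; [apply (is_rational_IZR 0)|].
    simpl. f_equal. ring.
  - intros _ _ [a [q [Ga [Hq ->]]]] [b [r [Gb [Hr ->]]]].
    exists (fst a + fst b, snd a + snd b), (q + r).
    split; [auto|]. split; [apply is_rational_plus; auto|]. simpl. f_equal. ring.
  - intros s _ Hs [a [q [Ga [Hq ->]]]].
    exists (s * fst a, s * snd a), (s * q).
    split; [auto|]. split; [apply is_rational_mult; auto|]. simpl. f_equal. ring.
  - intros y [a [q [Ga [Hq E]]]]. injection E as E1 E2.
    destruct (Req_dec q 0) as [->|Hq0].
    + apply G0y. replace (0, y) with a; [exact Ga|].
      destruct a as [a1 a2]; simpl in *. f_equal; lra.
    + exfalso. apply (Hx0 (- / q * snd a)).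
      replace x0 with (- / q * fst a) by (field_simplify_eq; [lra | exact Hq0]).
      apply Gscale; [apply is_rational_opp, is_rational_inv; exact Hq | exact Ga].
Qed.

Lemma exists_rational_linear_extension G0 :
  rational_linear_graph G0 ->
  exists phi : R -> R,
    (forall x y, phi (x + y) = phi x + phi y) /\
    (forall q x, is_rational q -> phi (q * x) = q * phi x) /\
    (forall x y, G0 (x, y) -> phi x = y).
Proof.
  intros HG0.
  (* Zorn_bigcup also needs the union of the empty chain to satisfy [P]. *)
  set (P := fun G : R * R -> Prop =>
    (forall t, ~ G t) \/ ((forall t, G0 t -> G t) /\ rational_linear_graph G)).
  destruct (@classical_sets.Zorn_bigcup _ P) as [A [PA Amax]].
  { intros F FP Fchain.
    destruct (classic (exists X t, F X /\ X t)) as [Hne|Hempty].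
    - right. destruct Hne as (X0 & t0 & FX0 & X0t0).
      destruct (FP X0 FX0) as [Hn|[G0X0 _]]; [exfalso; exact (Hn t0 X0t0)|].
      split; [intros t Ht; exists X0; auto|].
      apply rational_linear_graph_chain_union; [| |eauto].
      + intros X t FX Xt. destruct (FP X FX) as [Hn|[_ HX]]; [exfalso; exact (Hn t Xt)|exact HX].
      + intros X Y FX FY. destruct (Fchain X Y FX FY) as [XY|YX]; [left|right]; auto.
    - left. intros t [X FX Xt]. apply Hempty. eauto. }
  assert (Hproper : forall B, (forall t, A t -> B t) -> (exists t, B t /\ ~ A t) -> ~ P B).
  { intros B AB [t [Bt nAt]]. apply Amax. split; [exact AB|]. intros BA. exact (nAt (BA t Bt)). }
  assert (HA : (forall t, G0 t -> A t) /\ rational_linear_graph A).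
  { destruct PA as [Aempty|HA]; [exfalso|exact HA].
    apply (Hproper G0); [intros t At; destruct (Aempty t At)| |right; auto].
    exists (0, 0). split; [apply HG0 | apply Aempty]. }
  destruct HA as [G0A HA].
  assert (Atotal : forall x, exists y, A (x, y)).
  { intros x0. apply NNPP. intros Hx0.
    assert (Hx0' : forall y, ~ A (x0, y)) by (intros y Hy; apply Hx0; eauto).
    apply (Hproper (fun t => exists a q, A a /\ is_rational q /\ t = (fst a + q * x0, snd a))).
    - intros t At. exists t, 0. split; [exact At|]. split; [apply (is_rational_IZR 0)|].
      destruct t; simpl; f_equal; ring.
    - exists (x0, 0). split; [|apply Hx0'].
      exists (0, 0), 1. split; [apply HA|]. split; [apply (is_rational_IZR 1)|].
      simpl; f_equal; ring.
    - right. split; [intros t G0t; exists t, 0|apply rational_linear_graph_adjoin; auto].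
      split; [auto|]. split; [apply (is_rational_IZR 0)|]. destruct t; simpl; f_equal; ring. }
  destruct (functional_choice _ Atotal) as [phi Aphi].
  pose proof HA as (_ & Aadd & Ascale & _).
  exists phi. split; [|split].
  - intros x y. apply (rational_linear_graph_functional A (x + y)); [exact HA|apply Aphi|].
    exact (Aadd _ _ (Aphi x) (Aphi y)).
  - intros q x Hq. apply (rational_linear_graph_functional A (q * x)); [exact HA|apply Aphi|].
    exact (Ascale _ _ Hq (Aphi x)).
  - intros x y G0xy. apply (rational_linear_graph_functional A x); auto.
Qed.

Lemma rational_span_graph alpha beta :
  alpha <> 0 -> ~ is_rational (beta / alpha) ->
  rational_linear_graph
    (fun t => exists a b, is_rational a /\ is_rational b /\ t = (a * alpha + b * beta, b)).
Proof.
  intros Ha Hirr. split; [|split; [|split]].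
  - exists 0, 0. split; [apply (is_rational_IZR 0)|]. split; [apply (is_rational_IZR 0)|].
    f_equal; ring.
  - intros _ _ [a [b [Ha' [Hb ->]]]] [a' [b' [Ha'' [Hb' ->]]]].
    exists (a + a'), (b + b'). split; [apply is_rational_plus; auto|].
    split; [apply is_rational_plus; auto|]. simpl. f_equal; ring.
  - intros q _ Hq [a [b [Ha' [Hb ->]]]].
    exists (q * a), (q * b). split; [apply is_rational_mult; auto|].
    split; [apply is_rational_mult; auto|]. simpl. f_equal; ring.
  - intros y [a [b [Ha' [Hb E]]]]. injection E as E1 ->.
    destruct (Req_dec b 0) as [|Hb0]; [assumption|exfalso]. apply Hirr.
    replace (beta / alpha) with (- a * / b) by (field_simplify_eq; [lra | auto]).
    apply is_rational_mult; [apply is_rational_opp | apply is_rational_inv]; auto.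
Qed.

Lemma exists_rational_linear_zero_one alpha beta :
  alpha <> 0 -> ~ is_rational (beta / alpha) ->
  exists phi : R -> R,
    (forall x y, phi (x + y) = phi x + phi y) /\
    (forall q x, is_rational q -> phi (q * x) = q * phi x) /\
    phi alpha = 0 /\ phi beta = 1.
Proof.
  intros Ha Hirr.
  destruct (exists_rational_linear_extension _ (rational_span_graph _ _ Ha Hirr))
    as [phi (Hadd & Hscale & Hext)].
  exists phi. split; [exact Hadd|]. split; [exact Hscale|]. split; apply Hext.
  - exists 1, 0. split; [apply (is_rational_IZR 1)|]. split; [apply (is_rational_IZR 0)|].
    f_equal; ring.
  - exists 0, 1. split; [apply (is_rational_IZR 0)|]. split; [apply (is_rational_IZR 1)|].
    f_equal; ring.
Qed.

(* Take [q = floor (m t / alpha) / m] with [alpha / m < e]. *)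
Lemma rational_approximation alpha t e :
  0 < alpha -> 0 < e -> exists q, is_rational q /\ 0 <= t - q * alpha < e.
Proof.
  intros Ha He.
  set (m := up (alpha / e)).
  assert (Hm : alpha < e * IZR m).
  { destruct (archimed (alpha / e)) as [Hup _].
    apply (Rmult_lt_compat_l e) in Hup; [|exact He].
    replace (e * (alpha / e)) with alpha in Hup by (field; lra). exact Hup. }
  assert (Hm0 : 0 < IZR m) by nra.
  set (j := (up (t * IZR m / alpha) - 1)%Z).
  assert (Hj : IZR j <= t * IZR m / alpha < IZR j + 1).
  { destruct (archimed (t * IZR m / alpha)). unfold j. rewrite minus_IZR. lra. }
  exists (IZR j / IZR m). split.
  - exists j, m. split; [intros E; rewrite E in Hm0; lra | reflexivity].
  - assert (Hj' : IZR j * alpha <= t * IZR m < (IZR j + 1) * alpha).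
    { destruct Hj as [Hj1 Hj2].
      apply (Rmult_le_compat_r alpha) in Hj1; [|lra].
      apply (Rmult_lt_compat_r alpha) in Hj2; [|lra].
      replace (t * IZR m / alpha * alpha) with (t * IZR m) in * by (field; lra). lra. }
    replace (t - IZR j / IZR m * alpha) with ((t * IZR m - IZR j * alpha) / IZR m)
      by (field; lra).
    split.
    + apply Rmult_le_pos; [lra | left; apply Rinv_0_lt_compat; lra].
    + apply Rmult_lt_reg_r with (IZR m); [exact Hm0|].
      replace ((t * IZR m - IZR j * alpha) / IZR m * IZR m) with (t * IZR m - IZR j * alpha)
        by (field; lra). lra.
Qed.

(* [phi] vanishes on the rational multiples of [alpha], so subtracting one of those from
   [k * beta] shrinks the argument without changing the value [k]. *)
Lemma rational_linear_unbounded phi alpha beta :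
  (forall x y, phi (x + y) = phi x + phi y) ->
  (forall q x, is_rational q -> phi (q * x) = q * phi x) ->
  0 < alpha -> phi alpha = 0 -> phi beta = 1 ->
  forall e M, 0 < e -> exists t, 0 <= t < e /\ M <= phi t.
Proof.
  intros Hadd Hscale Ha Hphia Hphib e M He.
  set (k := up M).
  destruct (rational_approximation alpha (IZR k * beta) e Ha He) as [q [Hq Ht]].
  exists (IZR k * beta - q * alpha). split; [exact Ht|].
  replace (IZR k * beta - q * alpha) with (IZR k * beta + (- q) * alpha) by ring.
  rewrite Hadd, !Hscale, Hphia, Hphib by (apply is_rational_IZR || apply is_rational_opp; auto).
  destruct (archimed M). unfold k. lra.
Qed.

Lemma circle_eq (x y : circle) : proj1_sig x = proj1_sig y -> x = y.
Proof.
  destruct x as [x Hx], y as [y Hy]; simpl. intros ->. f_equal. apply proof_irrelevance.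
Qed.

Lemma Cmod_sqr (a b : R) : Cmod (a, b) * Cmod (a, b) = a * a + b * b.
Proof. unfold Cmod. rewrite sqrt_sqrt; simpl; nra. Qed.

Lemma Cmod_cos_sin t : Cmod (cos t, sin t) = 1.
Proof.
  unfold Cmod; simpl. pose proof (sin2_cos2 t) as H. unfold Rsqr in H.
  replace (cos t * (cos t * 1) + sin t * (sin t * 1)) with 1 by lra. apply sqrt_1.
Qed.

Definition cexp (t : R) : circle := exist _ (cos t, sin t) (Cmod_cos_sin t).

Definition circle_one : circle := cexp 0.

Lemma cexp_add s t : cmul (cexp s) (cexp t) = cexp (s + t).
Proof. apply circle_eq; simpl. rewrite cos_plus, sin_plus. unfold Cmult; simpl. f_equal; ring. Qed.

Lemma cmul_one_r x : cmul x circle_one = x.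
Proof.
  apply circle_eq; simpl. rewrite cos_0, sin_0.
  destruct (proj1_sig x) as [a b]. unfold Cmult; simpl. f_equal; ring.
Qed.

Lemma cmul_cinv_r x : cmul x (cinv x) = circle_one.
Proof.
  apply circle_eq; simpl. rewrite cos_0, sin_0. destruct x as [[a b] Hx]; simpl.
  assert (Hab : a * a + b * b = 1) by (rewrite <- (Cmod_sqr a b), Hx; ring).
  unfold Cinv, Cmult; simpl. f_equal; field_simplify_eq; nra.
Qed.

Lemma cinv_one : cinv circle_one = circle_one.
Proof.
  apply circle_eq; simpl. rewrite cos_0, sin_0. unfold Cinv; simpl. f_equal; field.
Qed.

Lemma cexp_surjective (z : circle) : exists t, -PI <= t <= PI /\ z = cexp t.
Proof.
  destruct z as [[a b] Hz].
  assert (Hab : a * a + b * b = 1) by (rewrite <- (Cmod_sqr a b), Hz; ring).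
  assert (Ha : -1 <= a <= 1) by nra.
  assert (Hb : sqrt (1 - a²) = Rabs b).
  { replace (1 - a²) with b² by (unfold Rsqr; lra). apply sqrt_Rsqr_abs. }
  pose proof (acos_bound a).
  destruct (Rle_dec 0 b) as [Hb0|Hb0].
  - exists (acos a). split; [lra|]. apply circle_eq; simpl.
    rewrite cos_acos, sin_acos, Hb, Rabs_pos_eq by lra. reflexivity.
  - exists (- acos a). split; [lra|]. apply circle_eq; simpl.
    rewrite cos_neg, sin_neg, cos_acos, sin_acos, Hb, Rabs_left by lra. f_equal; ring.
Qed.

Lemma cexp_eq_period s t : cexp s = cexp t -> exists k : Z, s = t + IZR k * (2 * PI).
Proof.
  intros E. assert (Ecs := f_equal (@proj1_sig _ _) E). simpl in Ecs. injection Ecs as Hc Hs.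
  assert (Hcd : cos (s - t) = 1).
  { rewrite cos_minus, Hc, Hs. pose proof (sin2_cos2 t) as H. unfold Rsqr in H. lra. }
  assert (Hhalf : sin ((s - t) / 2) = 0).
  { replace (s - t) with (2 * ((s - t) / 2)) in Hcd by field.
    rewrite cos_2a_sin in Hcd. nra. }
  destruct (sin_eq_0_0 _ Hhalf) as [k Hk]. exists k. lra.
Qed.

Lemma additive_factors_through_cexp (phi : R -> R) :
  (forall x y, phi (x + y) = phi x + phi y) ->
  (forall k : Z, phi (IZR k * (2 * PI)) = 0) ->
  exists psi : circle -> R,
    (forall t, psi (cexp t) = phi t) /\ (forall x y, psi (cmul x y) = psi x + psi y).
Proof.
  intros Hadd Hper.
  assert (Hinv : forall s t, cexp s = cexp t -> phi s = phi t).
  { intros s t E. destruct (cexp_eq_period s t E) as [k ->]. rewrite Hadd, Hper. ring. }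
  destruct (functional_choice (fun z t => z = cexp t)) as [ang Hang].
  { intros z. destruct (cexp_surjective z) as [t [_ Ht]]. eauto. }
  exists (fun z => phi (ang z)).
  assert (Hpsi : forall t, phi (ang (cexp t)) = phi t) by (intros t; apply Hinv; auto).
  split; [exact Hpsi|].
  intros x y. rewrite (Hang x), (Hang y), cexp_add, !Hpsi. apply Hadd.
Qed.

Definition cdist (x y : circle) : R := Cmod (proj1_sig x - proj1_sig y).

Lemma cdist_refl x : cdist x x = 0.
Proof.
  unfold cdist. replace (proj1_sig x - proj1_sig x)%C with (RtoC 0) by (apply injective_projections; simpl; ring).
  apply Cmod_0.
Qed.

Lemma cdist_triangle x y z : cdist x z <= cdist x y + cdist y z.
Proof.
  unfold cdist. replace (proj1_sig x - proj1_sig z)%C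
    with ((proj1_sig x - proj1_sig y) + (proj1_sig y - proj1_sig z))%C
    by (apply injective_projections; simpl; ring).
  apply Cmod_triangle.
Qed.

Lemma cdist_cmul u v x y : cdist (cmul u v) (cmul x y) <= cdist u x + cdist v y.
Proof.
  unfold cdist, cmul; simpl.
  replace (proj1_sig u * proj1_sig v - proj1_sig x * proj1_sig y)%C
    with (proj1_sig u * (proj1_sig v - proj1_sig y) + (proj1_sig u - proj1_sig x) * proj1_sig y)%C
    by (apply injective_projections; simpl; ring).
  eapply Rle_trans; [apply Cmod_triangle|].
  rewrite !Cmod_mult, (proj2_sig u), (proj2_sig y). lra.
Qed.

Lemma cdist_fst u v : Rabs (fst (proj1_sig u) - fst (proj1_sig v)) <= cdist u v.
Proof.
  unfold cdist. eapply Rle_trans; [|apply Rmax_Cmod]. eapply Rle_trans; [|apply Rmax_l]. now right.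
Qed.

Lemma cdist_snd u v : Rabs (snd (proj1_sig u) - snd (proj1_sig v)) <= cdist u v.
Proof.
  unfold cdist. eapply Rle_trans; [|apply Rmax_Cmod]. eapply Rle_trans; [|apply Rmax_r]. now right.
Qed.

Lemma sin_sqr_le x : sin x * sin x <= x * x.
Proof.
  assert (Hpos : forall y, 0 < y -> sin y * sin y <= y * y).
  { intros y Hy. destruct (Rle_lt_dec 1 y).
    - pose proof (SIN_bound y). nra.
    - assert (0 <= sin y) by (apply sin_ge_0; pose proof PI2_1; lra).
      pose proof (sin_lt_x y Hy). nra. }
  destruct (Rtotal_order x 0) as [Hx|[->|Hx]].
  - specialize (Hpos (- x)). rewrite sin_neg in Hpos. nra.
  - rewrite sin_0. lra.
  - auto.
Qed.

(* The chord [|e^(is) - e^(it)| = 2 |sin ((s - t)/2)|] is at most the arc. *)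
Lemma cdist_cexp s t : cdist (cexp s) (cexp t) <= Rabs (s - t).
Proof.
  unfold cdist; simpl.
  replace ((cos s, sin s) - (cos t, sin t))%C with (cos s - cos t, sin s - sin t)
    by (apply injective_projections; simpl; ring).
  rewrite <- (Rabs_pos_eq (Cmod _)) by apply Cmod_ge_0.
  apply Rsqr_le_abs_0. unfold Rsqr. rewrite Cmod_sqr.
  assert (Hcd : cos (s - t) = 1 - 2 * sin ((s - t) / 2) * sin ((s - t) / 2)).
  { rewrite <- cos_2a_sin. f_equal. field. }
  rewrite cos_minus in Hcd.
  pose proof (sin2_cos2 s) as Hs. pose proof (sin2_cos2 t) as Ht. unfold Rsqr in Hs, Ht.
  pose proof (sin_sqr_le ((s - t) / 2)). nra.
Qed.

Lemma interval_finite_subcover a b (delta : R -> R) :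
  (forall t, 0 < delta t) ->
  exists l : list R, forall s, a <= s <= b -> exists t, In t l /\ Rabs (s - t) < delta t.
Proof.
  intros Hdelta.
  set (fam := mkfamily (fun _ => True) (fun t s => Rabs (s - t) < delta t)
                (fun _ _ => I)).
  destruct (compact_P3 a b fam) as [D [Dcover [l Dl]]].
  - split.
    + intros s _. exists s. unfold fam; simpl. rewrite Rminus_diag, Rabs_R0. apply Hdelta.
    + intros t s Hs. exists (mkposreal _ (proj2 (Rlt_0_minus _ _) Hs)). intros r Hr.
      unfold disc in Hr; simpl in *.
      pose proof (Rabs_triang (r - s) (s - t)). replace (r - s + (s - t)) with (r - t) in * by ring.
      lra.
  - exists l. intros s Hs. destruct (Dcover s Hs) as [t [Hts Dt]].
    exists t. split; [apply Dl; split; [exact I | exact Dt] | exact Hts].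
Qed.

Section UpperTopology.

Variable psi : circle -> R.
Hypothesis psi_mul : forall x y, psi (cmul x y) = psi x + psi y.
Hypothesis psi_unbounded_near_one :
  forall e M, 0 < e -> exists w, cdist w circle_one < e /\ M <= psi w.

Definition up_ball (x : circle) (e : R) (u : circle) : Prop := psi x <= psi u /\ cdist u x < e.

Definition upper_topology (U : circle -> Prop) : Prop :=
  forall x, U x -> exists e, 0 < e /\ forall u, up_ball x e u -> U u.

Lemma up_ball_center x e : 0 < e -> up_ball x e x.
Proof. intros He. split; [lra|]. rewrite cdist_refl. exact He. Qed.

Lemma up_ball_mono x e e' u : e <= e' -> up_ball x e u -> up_ball x e' u.
Proof. intros He [H1 H2]. split; lra. Qed.

Lemma up_ball_open x e : upper_topology (up_ball x e).
Proof.
  intros u [H1 H2]. exists (e - cdist u x). split; [lra|].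
  intros v [H3 H4]. split; [lra|]. pose proof (cdist_triangle v u x). lra.
Qed.

Lemma upper_topology_is_topology : is_topology upper_topology.
Proof.
  split; [|split].
  - intros x _. exists 1. split; [lra | auto].
  - intros F HF x [U [FU Ux]]. destruct (HF U FU x Ux) as [e [He HU]].
    exists e. split; [exact He|]. intros u Hu. exists U. auto.
  - intros U V HU HV x [Ux Vx].
    destruct (HU x Ux) as [e1 [He1 H1]], (HV x Vx) as [e2 [He2 H2]].
    exists (Rmin e1 e2). split; [apply Rmin_pos; auto|].
    intros u Hu. split; [apply H1 | apply H2]; eapply up_ball_mono; eauto;
      [apply Rmin_l | apply Rmin_r].
Qed.

Lemma upper_topology_mul_continuous : mul_continuous upper_topology.
Proof.
  intros x y W HW Wxy. destruct (HW _ Wxy) as [e [He HWe]].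
  exists (up_ball x (e / 2)), (up_ball y (e / 2)).
  split; [apply up_ball_open|]. split; [apply up_ball_open|].
  split; [apply up_ball_center; lra|]. split; [apply up_ball_center; lra|].
  intros u v [Hu1 Hu2] [Hv1 Hv2]. apply HWe. split.
  - rewrite !psi_mul. lra.
  - pose proof (cdist_cmul u v x y). lra.
Qed.

Lemma upper_topology_continuous_lipschitz (f : circle -> R) :
  (forall u v, Rabs (f u - f v) <= cdist u v) -> continuous_real upper_topology f.
Proof.
  intros Hf x eps Heps. exists (up_ball x eps).
  split; [apply up_ball_open|]. split; [apply up_ball_center; exact Heps|].
  intros u [_ Hu]. pose proof (Hf u x). lra.
Qed.

Lemma upper_topology_functionally_hausdorff : functionally_hausdorff upper_topology.
Proof.
  intros x y Hxy.
  destruct (Req_dec (fst (proj1_sig x)) (fst (proj1_sig y))) as [E1|E1].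
  - exists (fun z => snd (proj1_sig z)). split; [apply upper_topology_continuous_lipschitz, cdist_snd|].
    intros E2. apply Hxy, circle_eq. apply injective_projections; assumption.
  - exists (fun z => fst (proj1_sig z)). split; [apply upper_topology_continuous_lipschitz, cdist_fst|].
    exact E1.
Qed.

Lemma upper_topology_first_countable : first_countable upper_topology.
Proof.
  intros x. exists (fun n => up_ball x (/ (INR n + 1))). split.
  - intros n. split; [apply up_ball_open|]. apply up_ball_center.
    apply Rinv_0_lt_compat. pose proof (pos_INR n). lra.
  - intros U HU Ux. destruct (HU x Ux) as [e [He HUe]].
    destruct (archimed_cor1 e He) as [N [HN1 HN2]].
    exists N. intros y Hy. apply HUe. eapply up_ball_mono; [|exact Hy].
    left. eapply Rle_lt_trans; [|exact HN1]. apply Rinv_le_contravar; [apply lt_0_INR; auto | lra].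
Qed.

Lemma psi_one : psi circle_one = 0.
Proof. pose proof (psi_mul circle_one circle_one) as H. rewrite cmul_one_r in H. lra. Qed.

Lemma upper_topology_not_group : ~ is_group_topology upper_topology.
Proof.
  intros (_ & _ & Hinv).
  destruct (Hinv _ (up_ball_open circle_one 1) circle_one) as [e [He Hball]].
  { rewrite cinv_one. apply up_ball_center. lra. }
  destruct (psi_unbounded_near_one e 1 He) as [w [Hw Hpsiw]].
  destruct (Hball w) as [Hinvw _]; [split; [rewrite psi_one; lra | exact Hw]|].
  pose proof (psi_mul w (cinv w)) as H. rewrite cmul_cinv_r, psi_one in H.
  rewrite psi_one in Hinvw. lra.
Qed.

(* The witness is [x w] with [w] close to [circle_one] and [psi w] large enough to lift
   [psi (x w)] above [psi p]. *)
Lemma up_balls_meet x p e d :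
  0 < e -> cdist x p < d -> exists u, up_ball x e u /\ up_ball p d u.
Proof.
  intros He Hd.
  destruct (psi_unbounded_near_one (Rmin e (d - cdist x p)) (Rmax 0 (psi p - psi x)))
    as [w [Hw1 Hw2]]; [apply Rmin_pos; lra|].
  assert (Hxw : cdist (cmul x w) x <= cdist w circle_one).
  { pose proof (cdist_cmul x w x circle_one) as H. rewrite cmul_one_r, cdist_refl in H. lra. }
  pose proof (Rmax_l 0 (psi p - psi x)). pose proof (Rmax_r 0 (psi p - psi x)).
  pose proof (Rmin_l e (d - cdist x p)). pose proof (Rmin_r e (d - cdist x p)).
  pose proof (cdist_triangle (cmul x w) x p).
  exists (cmul x w). unfold up_ball. rewrite psi_mul. lra.
Qed.

Lemma locally_finite_up_ball F :
  locally_finite upper_topology F ->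
  forall p, exists d l, 0 < d /\ forall A, F A -> (exists u, A u /\ up_ball p d u) -> In A l.
Proof.
  intros Hlf p. destruct (Hlf p) as [U [HU [Up [l Hl]]]].
  destruct (HU p Up) as [d [Hd HUd]].
  exists d, l. split; [exact Hd|]. intros A FA [u [Au Hu]].
  apply Hl. split; [exact FA|]. exists u. auto.
Qed.

(* Each member of [F] contains an up-ball, which by [up_balls_meet] meets every up-ball
   centred at a Euclidean-nearby point; finitely many such centres cover the circle. *)
Lemma upper_topology_pseudocompact : pseudocompact upper_topology.
Proof.
  intros F Hne Hlf.
  destruct (functional_choice (fun t dl => 0 < fst dl /\ forall A, F A ->
              (exists u, A u /\ up_ball (cexp t) (fst dl) u) -> In A (snd dl)))
    as [dl Hdl].
  { intros t. destruct (locally_finite_up_ball F Hlf (cexp t)) as [d [l H]]. exists (d, l). exact H. }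
  destruct (interval_finite_subcover (-PI) PI (fun t => fst (dl t))) as [ts Hts];
    [intros t; apply Hdl|].
  exists (flat_map (fun t => snd (dl t)) ts).
  intros A FA. destruct (Hne A FA) as [HA [x Ax]].
  destruct (cexp_surjective x) as [s [Hs ->]].
  destruct (Hts s Hs) as [t [Hin Hst]].
  destruct (HA _ Ax) as [e [He HAe]].
  destruct (up_balls_meet (cexp s) (cexp t) e (fst (dl t)) He) as [u [Hu1 Hu2]].
  { eapply Rle_lt_trans; [apply cdist_cexp | exact Hst]. }
  apply in_flat_map. exists t. split; [exact Hin|].
  apply (proj2 (Hdl t)); [exact FA|]. exists u. auto.
Qed.

End UpperTopology.

Lemma exists_circle_hom_unbounded_near_one :
  exists psi : circle -> R,
    (forall x y, psi (cmul x y) = psi x + psi y) /\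
    (forall e M, 0 < e -> exists w, cdist w circle_one < e /\ M <= psi w).
Proof.
  pose proof PI_RGT_0.
  destruct (exists_rational_linear_zero_one (2 * PI) (2 * PI * sqrt 2))
    as [phi (Hadd & Hscale & Hphi_2PI & Hphi_beta)].
  { lra. }
  { replace (2 * PI * sqrt 2 / (2 * PI)) with (sqrt 2) by (field; lra). apply sqrt2_irrational. }
  destruct (additive_factors_through_cexp phi Hadd) as [psi [Hpsi Hmul]].
  { intros k. rewrite Hscale, Hphi_2PI by apply is_rational_IZR. ring. }
  exists psi. split; [exact Hmul|].
  intros e M He.
  destruct (rational_linear_unbounded phi (2 * PI) (2 * PI * sqrt 2) Hadd Hscale
              ltac:(lra) Hphi_2PI Hphi_beta e M He) as [t [Ht HM]].
  exists (cexp t). rewrite Hpsi. split; [|exact HM].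
  eapply Rle_lt_trans; [apply cdist_cexp|]. rewrite Rminus_0_r, Rabs_pos_eq; lra.
Qed.

Theorem proposition7 :
  exists theta : (circle -> Prop) -> Prop,
    is_semigroup_topology theta /\
    functionally_hausdorff theta /\
    pseudocompact theta /\
    first_countable theta /\
    ~ is_group_topology theta.
Proof.
  destruct exists_circle_hom_unbounded_near_one as [psi [Hmul Hunbounded]].
  exists (upper_topology psi).
  split; [split|]; [apply upper_topology_is_topology | apply upper_topology_mul_continuous, Hmul|].
  split; [apply upper_topology_functionally_hausdorff|].
  split; [apply upper_topology_pseudocompact; assumption|].
  split; [apply upper_topology_first_countable|].
  apply upper_topology_not_group; assumption.
Qed.
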